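(* Let $f,g\in\mathbb{H}$ be two linearly independent pure unit quaternions (so $f^2=g^2=-1$, $f\neq\pm g$). Let $h\in L^1(\mathbb{R}^2,\mathbb{H})$ and define $h_{\pm}(\mathbf{x})=\frac12\big(h(\mathbf{x})\pm f\,h(\mathbf{x})\,g\big)$. Define $$\mathcal{F}^{f,g}_{\pm}\{h\}(\boldsymbol{\omega})=\mathcal{F}^{f,g}\{h_{\pm}\}(\boldsymbol{\omega})=\int_{\mathbb{R}^2} e^{-f x_1\omega_1}\, h_{\pm}(\mathbf{x})\, e^{-g x_2\omega_2}\, d^2\mathbf{x},\qquad \boldsymbol{\omega}=(\omega_1,\omega_2)\in\mathbb{R}^2 .$$ Then $$\mathcal{F}^{f,g}_{\pm}\{h\}(\boldsymbol{\omega})=\int_{\mathbb{R}^2} h_{\pm}(\mathbf{x})\,e^{-g(x_2\omega_2\mp x_1\omega_1)}\,d^2\mathbf{x}=\int_{\mathbb{R}^2} e^{-f(x_1\omega_1\mp x_2\omega_2)}\,h_{\pm}(\mathbf{x})\,d^2\mathbf{x},$$ and $\mathcal{F}^{f,g}\{h\}=\mathcal{F}^{f,g}_{+}\{h\}+\mathcal{F}^{f,g}_{-}\{h\}$.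
   Context: $\mathbb{H}$ is the real quaternion algebra with units $i,j,k$, $i^2=j^2=k^2=ijk=-1$. A pure quaternion has zero scalar part; a pure unit quaternion $f$ satisfies $f^2=-1$. $\mathbf{x}=(x_1,x_2)\in\mathbb{R}^2$, $d^2\mathbf{x}=dx_1dx_2$, and for a pure unit quaternion $f$ and real $\alpha$, $e^{\alpha f}=\cos\alpha+f\sin\alpha$. *)

From HB Require Import structures.
From mathcomp Require Import all_boot all_order all_algebra.
From mathcomp Require Import all_classical all_reals all_analysis.
Set Implicit Arguments. Unset Strict Implicit. Unset Printing Implicit Defensive.
Import Order.TTheory GRing.Theory Num.Theory.
Local Open Scope ring_scope.

(* Real quaternions a + b i + c j + d k, as 4 real coordinates. *)
Record quat (R : realType) := Quat { q0 : R; q1 : R; q2 : R; q3 : R }.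
Arguments Quat {R}.

Section Quat.
Variable R : realType.
Implicit Types p q : quat R.

Definition qadd p q := Quat (q0 p + q0 q) (q1 p + q1 q) (q2 p + q2 q) (q3 p + q3 q).
Definition qopp q := Quat (- q0 q) (- q1 q) (- q2 q) (- q3 q).
Definition qscale (a : R) q := Quat (a * q0 q) (a * q1 q) (a * q2 q) (a * q3 q).
Definition qzero : quat R := Quat 0 0 0 0.
Definition qone : quat R := Quat 1 0 0 0.
(* Hamilton product, with i^2 = j^2 = k^2 = ijk = -1. *)
Definition qmul p q :=
  Quat (q0 p * q0 q - q1 p * q1 q - q2 p * q2 q - q3 p * q3 q)
       (q0 p * q1 q + q1 p * q0 q + q2 p * q3 q - q3 p * q2 q)
       (q0 p * q2 q - q1 p * q3 q + q2 p * q0 q + q3 p * q1 q)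
       (q0 p * q3 q + q1 p * q2 q - q2 p * q1 q + q3 p * q0 q).

Definition pure_unit q := q0 q = 0 /\ qmul q q = qopp qone.

Definition qlin_indep p q :=
  forall a b : R, qadd (qscale a p) (qscale b q) = qzero -> a = 0 /\ b = 0.

Definition qexp (alpha : R) f := qadd (qscale (cos alpha) qone) (qscale (sin alpha) f).

Definition leb2 := ((@lebesgue_measure R) \x (@lebesgue_measure R))%E.

Definition qL1 (h : R * R -> quat R) :=
  [/\ leb2.-integrable setT (fun x => (q0 (h x))%:E),
      leb2.-integrable setT (fun x => (q1 (h x))%:E),
      leb2.-integrable setT (fun x => (q2 (h x))%:E) &
      leb2.-integrable setT (fun x => (q3 (h x))%:E)].

Definition qint (u : R * R -> quat R) : quat R :=
  Quat (Rintegral leb2 setT (fun x => q0 (u x)))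
       (Rintegral leb2 setT (fun x => q1 (u x)))
       (Rintegral leb2 setT (fun x => q2 (u x)))
       (Rintegral leb2 setT (fun x => q3 (u x))).

Definition hsplit (s : R) f g (h : R * R -> quat R) (x : R * R) : quat R :=
  qscale (2^-1) (qadd (h x) (qscale s (qmul (qmul f (h x)) g))).

Definition QFT f g (h : R * R -> quat R) (w : R * R) : quat R :=
  qint (fun x => qmul (qmul (qexp (- (x.1 * w.1)) f) (h x)) (qexp (- (x.2 * w.2)) g)).

End Quat.

From HB Require Import structures.
From mathcomp Require Import all_boot all_order all_algebra.
From mathcomp Require Import all_classical all_reals all_analysis.
From mathcomp Require Import ring measurable_realfun.
Set Implicit Arguments. Unset Strict Implicit. Unset Printing Implicit Defensive.
Import Order.TTheory GRing.Theory Num.Theory.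
Local Open Scope ring_scope.

(* With [f^2 = g^2 = -1] and [s = +-1], the split parts [h_s = (h + s f h g)/2]
   satisfy [f h_s = - s h_s g]. Hence [e^(a f) h_s = h_s e^(- s a g)] and
   [h_s e^(b g) = e^(- s b f) h_s]: either exponential of the two-sided kernel
   can be carried across [h_s] and merged with the other one, pointwise under
   the integral. The splitting [F = F_+ + F_-] is linearity of the integral,
   legitimate because the exponential factors are bounded and measurable, so
   every integrand is in L^1. *)

Section QuaternionAlgebra.
Variable R : realType.
Implicit Types (p q u v : quat R) (s a b : R).

Lemma quat_ext p q :
  q0 p = q0 q -> q1 p = q1 q -> q2 p = q2 q -> q3 p = q3 q -> p = q.
Proof. by case: p => ????; case: q => ???? /= -> -> -> ->. Qed.

Definition qsplit s f g p := qscale (2^-1) (qadd p (qscale s (qmul (qmul f p) g))).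

Ltac quat_ring :=
  apply: quat_ext; cbv beta iota delta [qsplit qexp qmul qadd qscale qopp qone q0 q1 q2 q3]; ring.

Lemma qmulA p q u : qmul (qmul p q) u = qmul p (qmul q u).
Proof. quat_ring. Qed.

Lemma qexpD a b g : qmul g g = qopp (qone R) ->
  qmul (qexp a g) (qexp b g) = qexp (a + b) g.
Proof.
move=> gg.
have -> : qmul (qexp a g) (qexp b g) = qadd (qscale (cos a * cos b) (qone R))
   (qadd (qscale (cos a * sin b + sin a * cos b) g) (qscale (sin a * sin b) (qmul g g))).
  by quat_ring.
by rewrite gg /qexp cosD sinD; quat_ring.
Qed.

Lemma qexp_intertwine a f g p : qmul f p = qmul p g ->
  qmul (qexp a f) p = qmul p (qexp a g).
Proof.
move=> fpg.
have -> : qmul (qexp a f) p = qadd (qscale (cos a) p) (qscale (sin a) (qmul f p)) by quat_ring.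
by rewrite fpg; quat_ring.
Qed.

Lemma qexp_sign a s g : s = 1 \/ s = -1 -> qexp a (qscale s g) = qexp (s * a) g.
Proof. by case=> ->; rewrite ?mul1r ?mulN1r /qexp ?cosN ?sinN; quat_ring. Qed.

Lemma qsplit_intertwine s f g p :
  qmul f f = qopp (qone R) -> qmul g g = qopp (qone R) -> s ^+ 2 = 1 ->
  qmul f (qsplit s f g p) = qmul (qsplit s f g p) (qscale (- s) g).
Proof.
move=> ff gg s2.
have -> : qmul f (qsplit s f g p) =
    qscale (2^-1) (qadd (qmul f p) (qscale s (qmul (qmul (qmul f f) p) g))).
  by quat_ring.
have -> : qmul (qsplit s f g p) (qscale (- s) g) =
    qscale (2^-1) (qadd (qscale (- s) (qmul p g))
                        (qscale (- s ^+ 2) (qmul f (qmul p (qmul g g))))).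
  by quat_ring.
by rewrite ff gg s2; quat_ring.
Qed.

Lemma qsplit_sum f g p : p = qadd (qsplit 1 f g p) (qsplit (-1) f g p).
Proof.
apply: quat_ext; cbv beta iota delta [qsplit qmul qadd qscale q0 q1 q2 q3].
all: by field; rewrite ?pnatr_eq0.
Qed.

Lemma qmul_sandwichD p q u v :
  qmul (qmul p (qadd q u)) v = qadd (qmul (qmul p q) v) (qmul (qmul p u) v).
Proof. quat_ring. Qed.

Section SplitKernel.
Variables (f g : quat R) (s : R).
Hypotheses (ff : qmul f f = qopp (qone R)) (gg : qmul g g = qopp (qone R))
           (s_sign : s = 1 \/ s = -1).

Let s2 : s ^+ 2 = 1.
Proof. by case: s_sign => ->; rewrite ?sqrrN expr1n. Qed.

Lemma qsplit_intertwine_sym p :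
  qmul (qscale (- s) f) (qsplit s f g p) = qmul (qsplit s f g p) g.
Proof.
have -> : qmul (qscale (- s) f) (qsplit s f g p) = qscale (- s) (qmul f (qsplit s f g p)).
  by quat_ring.
rewrite qsplit_intertwine //.
move: (qsplit s f g p) => q.
have -> : qscale (- s) (qmul q (qscale (- s) g)) = qmul q (qscale (s ^+ 2) g) by quat_ring.
by rewrite s2; quat_ring.
Qed.

Lemma qft_kernel_qsplit_r p a b :
  qmul (qmul (qexp (- a) f) (qsplit s f g p)) (qexp (- b) g) =
  qmul (qsplit s f g p) (qexp (- (b - s * a)) g).
Proof.
rewrite (qexp_intertwine _ (qsplit_intertwine p ff gg s2)) qexp_sign; last first.
  by case: s_sign => ->; rewrite ?opprK; [right | left].
by rewrite qmulA qexpD //; congr (qmul _ (qexp _ g)); ring.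
Qed.

Lemma qft_kernel_qsplit_l p a b :
  qmul (qmul (qexp (- a) f) (qsplit s f g p)) (qexp (- b) g) =
  qmul (qexp (- (a - s * b)) f) (qsplit s f g p).
Proof.
rewrite qmulA -(qexp_intertwine _ (qsplit_intertwine_sym p)) qexp_sign; last first.
  by case: s_sign => ->; rewrite ?opprK; [right | left].
by rewrite -qmulA qexpD //; congr (qmul (qexp _ f) _); ring.
Qed.

End SplitKernel.

End QuaternionAlgebra.

Section Integrability.
Variable R : realType.
Local Notation R2 := (measurableTypeR R * measurableTypeR R)%type.
Implicit Types (u v c : R2 -> R) (k : R).

Definition rL1 u := (@leb2 R).-integrable setT (fun x => (u x)%:E).

Definition bounded_measurable c :=
  measurable_fun setT c /\ exists M, forall x, `|c x| <= M.

Lemma rL1D u v : rL1 u -> rL1 v -> rL1 (fun x => u x + v x).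
Proof.
by move=> iu iv; apply: eq_integrable (integrableD _ iu iv) => // x _ /=; rewrite EFinD.
Qed.

Lemma rL1B u v : rL1 u -> rL1 v -> rL1 (fun x => u x - v x).
Proof.
by move=> iu iv; apply: eq_integrable (integrableB _ iu iv) => // x _ /=; rewrite EFinB.
Qed.

Lemma rL1Zl k u : rL1 u -> rL1 (fun x => k * u x).
Proof.
by move=> iu; apply: eq_integrable (integrableZl _ k iu) => // x _ /=; rewrite EFinM.
Qed.

Lemma rL1_mull c u : bounded_measurable c -> rL1 u -> rL1 (fun x => c x * u x).
Proof.
move=> [mc [M cM]] iu.
have bc : [bounded c x | x in setT].
  exists M; split; first exact: num_real.
  by move=> y /ltW My x _; exact: le_trans (cM x) My.
by apply: eq_integrable (integrableMr measurableT mc bc iu) => // x _ /=; rewrite EFinM.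
Qed.

Lemma rL1_mulr c u : bounded_measurable c -> rL1 u -> rL1 (fun x => u x * c x).
Proof.
move=> bc iu; have := rL1_mull bc iu; rewrite /rL1.
by apply: eq_integrable => // x _ /=; rewrite mulrC.
Qed.

Lemma bounded_measurable_cst k : bounded_measurable (fun _ => k).
Proof. by split; [exact: measurable_cst | exists `|k|]. Qed.

Lemma bounded_measurable_trig (t : R2 -> R) k1 k2 : measurable_fun setT t ->
  bounded_measurable (fun x => cos (t x) * k1 + sin (t x) * k2).
Proof.
move=> mt; split.
  apply: measurable_funD; apply: measurable_funM => //;
    apply: measurableT_comp mt => //; apply: continuous_measurable_fun.
  - exact: continuous_cos.
  - exact: continuous_sin.
exists (`|k1| + `|k2|) => x.
rewrite (le_trans (ler_normD _ _)) // lerD // normrM ler_piMl //.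
- by rewrite ler_norml cos_geN1 cos_le1.
- by rewrite ler_norml sin_geN1 sin_le1.
Qed.

End Integrability.

Section QuaternionIntegrals.
Variable R : realType.
Local Notation R2 := (measurableTypeR R * measurableTypeR R)%type.
Implicit Types (u v c : R2 -> quat R) (f g : quat R).

Definition qbounded_measurable c :=
  [/\ bounded_measurable (fun x => q0 (c x)), bounded_measurable (fun x => q1 (c x)),
      bounded_measurable (fun x => q2 (c x)) & bounded_measurable (fun x => q3 (c x))].

Lemma qbounded_measurable_cst (p : quat R) : qbounded_measurable (fun _ => p).
Proof. by split; exact: bounded_measurable_cst. Qed.

Lemma qbounded_measurable_qexp (t : R2 -> R) g : measurable_fun setT t ->
  qbounded_measurable (fun x => qexp (t x) g).
Proof. by move=> mt; split; exact: bounded_measurable_trig. Qed.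

Lemma qL1_add u v : qL1 u -> qL1 v -> qL1 (fun x => qadd (u x) (v x)).
Proof. by case=> ????; case=> ????; split; apply: rL1D. Qed.

Lemma qL1_scale k u : qL1 u -> qL1 (fun x => qscale k (u x)).
Proof. by case=> ????; split; apply: rL1Zl. Qed.

Lemma qL1_mull c u : qbounded_measurable c -> qL1 u -> qL1 (fun x => qmul (c x) (u x)).
Proof.
case=> ????; case=> ????; split;
  repeat first [apply: rL1B | apply: rL1D | apply: rL1_mull]; assumption.
Qed.

Lemma qL1_mulr c u : qbounded_measurable c -> qL1 u -> qL1 (fun x => qmul (u x) (c x)).
Proof.
case=> ????; case=> ????; split;
  repeat first [apply: rL1B | apply: rL1D | apply: rL1_mulr]; assumption.
Qed.

Lemma qintD u v : qL1 u -> qL1 v ->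
  qint (fun x => qadd (u x) (v x)) = qadd (qint u) (qint v).
Proof. by case=> ????; case=> ????; apply: quat_ext; apply: RintegralD. Qed.

Lemma qL1_hsplit s f g h : qL1 h -> qL1 (hsplit s f g h).
Proof.
move=> ih; apply: qL1_scale; apply: qL1_add => //; apply: qL1_scale.
apply: (qL1_mulr (qbounded_measurable_cst g)).
exact: (qL1_mull (qbounded_measurable_cst f)).
Qed.

Lemma qL1_qft_integrand f g u (w : R * R) : qL1 u -> qL1 (fun x =>
  qmul (qmul (qexp (- (x.1 * w.1)) f) (u x)) (qexp (- (x.2 * w.2)) g)).
Proof.
move=> iu.
have m1 : measurable_fun [set: R2] (fun x => - (x.1 * w.1)).
  by apply/measurable_funN/measurable_funM => //; exact: measurable_fst.
have m2 : measurable_fun [set: R2] (fun x => - (x.2 * w.2)).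
  by apply/measurable_funN/measurable_funM => //; exact: measurable_snd.
apply: (qL1_mulr (qbounded_measurable_qexp _ m2)).
exact: (qL1_mull (qbounded_measurable_qexp _ m1)).
Qed.

Lemma QFTD f g u v (w : R * R) : qL1 u -> qL1 v ->
  QFT f g (fun x => qadd (u x) (v x)) w = qadd (QFT f g u w) (QFT f g v w).
Proof.
move=> iu iv; rewrite /QFT -qintD; try exact: qL1_qft_integrand.
by congr qint; apply: funext => x; rewrite qmul_sandwichD.
Qed.

End QuaternionIntegrals.

Theorem theorem2 (R : realType) (f g : quat R) (h : R * R -> quat R) :
  pure_unit f -> pure_unit g -> qlin_indep f g -> qL1 h ->
  (forall (s : R), (s = 1 \/ s = -1) -> forall w : R * R,
     QFT f g (hsplit s f g h) w =
       qint (fun x => qmul (hsplit s f g h x)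
                            (qexp (- (x.2 * w.2 - s * (x.1 * w.1))) g))
  /\ QFT f g (hsplit s f g h) w =
       qint (fun x => qmul (qexp (- (x.1 * w.1 - s * (x.2 * w.2))) f)
                            (hsplit s f g h x)))
  /\ (forall w : R * R,
        QFT f g h w = qadd (QFT f g (hsplit 1 f g h) w) (QFT f g (hsplit (-1) f g h) w)).
Proof.
move=> [_ ff] [_ gg] _ ih; split=> [s s_sign w | w].
  by split; rewrite /QFT; congr qint; apply: funext => x;
    [exact: qft_kernel_qsplit_r | exact: qft_kernel_qsplit_l].
rewrite -QFTD; try exact: qL1_hsplit.
by congr (QFT f g _ w); apply: funext => x; exact: qsplit_sum.
Qed.
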